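(* There are absolute constants $c,C>0$ such that for every integer $k\ge2$ and infinitely many $n$, there is a $k$-monotone sequence $S_k\in[n]^n$ (of length $n$) with $\mathsf{F}^{k-1}(S_k)\ge c\,\frac{n}{k}\log(n/k)$ and $\mathsf{F}^{k}(S_k)\le C\,n$.
   Context: $\log(x)=\log_2(\max\{2,x\})$. A sequence $X\in[n]^m$ is $k$-monotone if it can be partitioned into $k$ (not necessarily contiguous) subsequences that are all increasing or all decreasing. $k$-finger cost: for a static BST $T$ on $[n]$, $d_T(a,b)$ is the number of edges between $a$ and $b$ in $T$. A $k$-finger strategy is an initial vector $\vec\ell\in[n]^k$ and $\vec f\in[k]^m$, finger $f_t$ serving $x_t$, with cost $\sum_{t=1}^m(1+d_T(x_t,p_t))$ where $p_t$ is the position of finger $f_t$ before time $t$ (its last served key, or $\ell_{f_t}$). $\mathsf{F}^k_T(X)$ is the minimum such cost and $\mathsf{F}^k(X)=\min_T\mathsf{F}^k_T(X)$ over BSTs $T$ on $[n]$. *)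

From Stdlib Require Import Reals Lia Arith List.
Import ListNotations.
Open Scope R_scope.

Definition plog (x : R) : R := ln (Rmax 2 x) / ln 2.

Inductive tree : Type :=
| Leaf : tree
| Node : tree -> nat -> tree -> tree.

Fixpoint inorder (t : tree) : list nat :=
  match t with
  | Leaf => []
  | Node l a r => inorder l ++ a :: inorder r
  end.

Definition is_BST_on (n : nat) (t : tree) : Prop := inorder t = seq 1 n.

Fixpoint search_path (t : tree) (a : nat) : list nat :=
  match t with
  | Leaf => []
  | Node l b r =>
      if Nat.eqb a b then [b]
      else if Nat.ltb a b then b :: search_path l a
      else b :: search_path r a
  end.

Fixpoint lcp (p q : list nat) : nat :=
  match p, q with
  | x :: p', y :: q' => if Nat.eqb x y then S (lcp p' q') else O
  | _, _ => O
  end.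

(* d_T(a,b): number of edges on the path between the nodes a and b of T. *)
Definition dist (t : tree) (a b : nat) : nat :=
  (length (search_path t a) + length (search_path t b)
   - 2 * lcp (search_path t a) (search_path t b))%nat.

Fixpoint finger_cost (t : tree) (pos : nat -> nat) (fs X : list nat) : nat :=
  match fs, X with
  | fi :: fs', x :: X' =>
      (1 + dist t x (pos fi)
       + finger_cost t (fun j => if Nat.eqb j fi then x else pos j) fs' X')%nat
  | _, _ => O
  end.

(* A k-finger strategy on a BST T on [n] for X: initial vector l in [n]^k and
   f in [k]^m (fingers indexed 0..k-1). *)
Definition valid_strategy (n k : nat) (X : list nat) (l fs : list nat) : Prop :=
  length l = k /\ (forall p, In p l -> (1 <= p <= n)%nat) /\
  length fs = length X /\ (forall i, In i fs -> (i < k)%nat).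

Definition attainable (n k : nat) (X : list nat) (c : nat) : Prop :=
  exists t l fs, is_BST_on n t /\ valid_strategy n k X l fs /\
    finger_cost t (fun i => nth i l O) fs X = c.

Definition is_Fk (n k : nat) (X : list nat) (v : nat) : Prop :=
  attainable n k X v /\ (forall c, attainable n k X c -> (v <= c)%nat).

Definition k_monotone (k : nat) (X : list nat) : Prop :=
  exists col : nat -> nat,
    (forall i, (i < length X)%nat -> (col i < k)%nat) /\
    ((forall i j, (i < j < length X)%nat -> col i = col j ->
        (nth i X O < nth j X O)%nat) \/
     (forall i j, (i < j < length X)%nat -> col i = col j ->
        (nth i X O > nth j X O)%nat)).

(* Write n = k m.  Round i of the sequence requests a m + i + 1 for a = 0, ..., k - 1, so the
   requests whose index is a mod k read the run a m + 1, ..., a m + m: the sequence is k-monotone,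
   and on the path 1 - 2 - ... - n, k fingers walking up their runs pay at most 2 per request.

   With k - 1 fingers, in every round some finger serves two requests a m + i + 1 < b m + i + 1 and
   pays their distance in the tree.  For fixed a < b these pairs are crossing: every left end is
   below every right end, and left and right ends increase together.  In any BST fewer than 4^d
   crossing pairs have distance < d: descend from the root to the first node separating one of the
   pairs; then every left end lies within depth 2d of that node.  So at most k^2 4^d rounds are
   cheap, and for m = 2^(4q), d = q, at least m/2 rounds cost q each, giving
   F^(k-1) >= q m / 2 = (n/k) log(n/k) / 8. *)

From Stdlib Require Import Reals List Lia Lra Arith Sorted Classical Wf_nat FinFun.
Import ListNotations.
Open Scope nat_scope.

(** * Search trees and crossing pairs *)

Fixpoint bst (t : tree) : Prop :=
  match t with
  | Leaf => True
  | Node l a r => bst l /\ bst r /\ (forall x, In x (inorder l) -> x < a) /\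
                  (forall x, In x (inorder r) -> a < x)
  end.

Lemma StronglySorted_app_inv (l1 l2 : list nat) :
  StronglySorted lt (l1 ++ l2) ->
  StronglySorted lt l1 /\ StronglySorted lt l2 /\ (forall x y, In x l1 -> In y l2 -> x < y).
Proof.
  induction l1 as [|a l1 IH]; simpl; intros H.
  - repeat split; auto. constructor. intros x y [].
  - apply StronglySorted_inv in H as [H Ha]. rewrite Forall_forall in Ha.
    destruct (IH H) as (H1 & H2 & H12). repeat split; auto.
    + constructor; auto. apply Forall_forall. intros x Hx. apply Ha, in_or_app; auto.
    + intros x y [<-|Hx] Hy; auto. apply Ha, in_or_app; auto.
Qed.

Lemma bst_of_sorted t : StronglySorted lt (inorder t) -> bst t.
Proof.
  induction t as [|l IHl a r IHr]; simpl; intros H; auto.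
  destruct (StronglySorted_app_inv _ _ H) as (Hl & Har & Hlar).
  apply StronglySorted_inv in Har as [Hr Ha]. rewrite Forall_forall in Ha.
  repeat split; auto. intros x Hx. apply Hlar; simpl; auto.
Qed.

Lemma StronglySorted_seq s n : StronglySorted lt (seq s n).
Proof.
  revert s; induction n as [|n IH]; intros s; simpl; constructor; auto.
  apply Forall_forall. intros x Hx. apply in_seq in Hx. lia.
Qed.

Lemma is_BST_on_bst n t : is_BST_on n t -> bst t.
Proof. unfold is_BST_on. intros H. apply bst_of_sorted. rewrite H. apply StronglySorted_seq. Qed.

Lemma in_inorder_l l a r x :
  bst (Node l a r) -> In x (inorder (Node l a r)) -> x < a -> In x (inorder l).
Proof.
  intros (_ & _ & _ & Hr) Hx Hxa. simpl in Hx. apply in_app_or in Hx as [Hx|[<-|Hx]]; auto.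
  - lia.
  - specialize (Hr x Hx). lia.
Qed.

Lemma in_inorder_r l a r x :
  bst (Node l a r) -> In x (inorder (Node l a r)) -> a < x -> In x (inorder r).
Proof.
  intros (_ & _ & Hl & _) Hx Hxa. simpl in Hx. apply in_app_or in Hx as [Hx|[<-|Hx]]; auto.
  - specialize (Hl x Hx). lia.
  - lia.
Qed.

Definition depth (t : tree) (x : nat) : nat := length (search_path t x).

Lemma search_path_root l a r : search_path (Node l a r) a = [a].
Proof. simpl. rewrite Nat.eqb_refl. reflexivity. Qed.

Lemma search_path_l l a r x : x < a -> search_path (Node l a r) x = a :: search_path l x.
Proof.
  intros H. simpl. destruct (Nat.eqb_spec x a); [lia|].
  destruct (Nat.ltb_spec x a); [reflexivity|lia].
Qed.

Lemma search_path_r l a r x : a < x -> search_path (Node l a r) x = a :: search_path r x.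
Proof.
  intros H. simpl. destruct (Nat.eqb_spec x a); [lia|].
  destruct (Nat.ltb_spec x a); [lia|reflexivity].
Qed.

Lemma search_path_node_hd l a r x : exists p, search_path (Node l a r) x = a :: p.
Proof. simpl. destruct (x =? a); [|destruct (x <? a)]; eauto. Qed.

Lemma lcp_comm p q : lcp p q = lcp q p.
Proof.
  revert q; induction p as [|x p IH]; intros [|y q]; simpl; auto.
  rewrite Nat.eqb_sym. destruct (Nat.eqb_spec y x); subst; auto.
Qed.

Lemma lcp_le_length p q : lcp p q <= length p.
Proof.
  revert q; induction p as [|x p IH]; intros [|y q]; simpl; try lia.
  specialize (IH q). destruct (x =? y); simpl; lia.
Qed.

Lemma lcp_cons_same a p q : lcp (a :: p) (a :: q) = S (lcp p q).
Proof. simpl. rewrite Nat.eqb_refl. reflexivity. Qed.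

Lemma dist_sym t x y : dist t x y = dist t y x.
Proof. unfold dist. rewrite lcp_comm. lia. Qed.

Lemma depth_le_dist_lcp t x y :
  depth t x <= dist t x y + lcp (search_path t x) (search_path t y).
Proof.
  unfold dist, depth.
  pose proof (lcp_le_length (search_path t y) (search_path t x)) as H.
  rewrite lcp_comm in H. lia.
Qed.

Lemma dist_l l a r x y : x < a -> y < a -> dist (Node l a r) x y = dist l x y.
Proof.
  intros Hx Hy. unfold dist. rewrite !search_path_l, lcp_cons_same by assumption.
  simpl. lia.
Qed.

Lemma dist_r l a r x y : a < x -> a < y -> dist (Node l a r) x y = dist r x y.
Proof.
  intros Hx Hy. unfold dist. rewrite !search_path_r, lcp_cons_same by assumption.
  simpl. lia.
Qed.

Lemma depth_node_pos l a r x : 1 <= depth (Node l a r) x.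
Proof. unfold depth. destruct (search_path_node_hd l a r x) as [p ->]. simpl. lia. Qed.

Lemma lcp_straddle l a r x y :
  bst (Node l a r) -> x <= a <= y ->
  lcp (search_path (Node l a r) x) (search_path (Node l a r) y) <= 1.
Proof.
  intros HB Hxy.
  destruct (Nat.eq_dec x a) as [->|Hx].
  { rewrite search_path_root. apply (lcp_le_length [a]). }
  destruct (Nat.eq_dec y a) as [->|Hy].
  { rewrite lcp_comm, search_path_root. apply (lcp_le_length [a]). }
  rewrite search_path_l, search_path_r, lcp_cons_same by lia.
  destruct HB as (_ & _ & Hl & Hr).
  destruct l as [|l1 b r1]; [simpl; lia|].
  destruct r as [|l2 c r2]; [destruct (search_path _ x); simpl; lia|].
  destruct (search_path_node_hd l1 b r1 x) as [p ->].
  destruct (search_path_node_hd l2 c r2 y) as [q ->].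
  assert (b < a) by (apply Hl; simpl; apply in_elt).
  assert (a < c) by (apply Hr; simpl; apply in_elt).
  simpl. destruct (Nat.eqb_spec b c); lia.
Qed.

(* [lcp] of two search paths is the depth of the lowest common ancestor, which lies above every
   key in between. *)
Lemma lcp_le_depth_between t x y z :
  bst t -> x <= z <= y -> lcp (search_path t x) (search_path t y) <= depth t z.
Proof.
  revert x y z; induction t as [|l IHl a r IHr]; intros x y z HB Hz; [simpl; lia|].
  destruct (le_lt_dec x a) as [Hxa|Hax]; [destruct (le_lt_dec a y) as [Hay|Hya]|].
  - pose proof (depth_node_pos l a r z). pose proof (lcp_straddle l a r x y HB). lia.
  - unfold depth. rewrite !search_path_l, lcp_cons_same by lia. simpl.
    apply le_n_S, IHl; [apply HB|lia].
  - unfold depth. rewrite !search_path_r, lcp_cons_same by lia. simpl.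
    apply le_n_S, IHr; [apply HB|lia].
Qed.

Lemma length_filter_trichotomy a (E : list nat) :
  length E = length (filter (fun e => e <? a) E) + length (filter (fun e => e =? a) E)
             + length (filter (fun e => a <? e) E).
Proof.
  induction E as [|e E IH]; simpl; auto.
  destruct (Nat.ltb_spec e a), (Nat.eqb_spec e a), (Nat.ltb_spec a e); simpl; lia.
Qed.

Lemma NoDup_filter_eq_length a (E : list nat) : NoDup E -> length (filter (fun e => e =? a) E) <= 1.
Proof.
  intros HE. apply (NoDup_incl_length (l' := [a])); [now apply NoDup_filter|].
  intros e He. apply filter_In in He as [_ He]. apply Nat.eqb_eq in He. now left.
Qed.

Lemma NoDup_bounded_depth_length U D E :
  bst U -> NoDup E -> (forall e, In e E -> In e (inorder U) /\ depth U e <= D) ->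
  length E < 2 ^ D.
Proof.
  revert D E; induction U as [|l IHl a r IHr]; intros D E HB HE HU.
  - destruct E as [|e E]; [apply Nat.neq_0_lt_0, Nat.pow_nonzero; lia|].
    destruct (HU e (or_introl eq_refl)) as [[] _].
  - destruct D as [|D].
    { destruct E as [|e E]; simpl; [lia|].
      destruct (HU e (or_introl eq_refl)) as [_ He]. pose proof (depth_node_pos l a r e). lia. }
    assert (Hl : length (filter (fun e => e <? a) E) < 2 ^ D).
    { apply IHl; [apply HB|now apply NoDup_filter|].
      intros e He. apply filter_In in He as [He Hea]. apply Nat.ltb_lt in Hea.
      destruct (HU e He) as [Hin Hd]. split; [eapply in_inorder_l; eauto|].
      unfold depth in *. rewrite search_path_l in Hd by assumption. simpl in Hd. lia. }
    assert (Hr : length (filter (fun e => a <? e) E) < 2 ^ D).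
    { apply IHr; [apply HB|now apply NoDup_filter|].
      intros e He. apply filter_In in He as [He Hea]. apply Nat.ltb_lt in Hea.
      destruct (HU e He) as [Hin Hd]. split; [eapply in_inorder_r; eauto|].
      unfold depth in *. rewrite search_path_r in Hd by assumption. simpl in Hd. lia. }
    rewrite (length_filter_trichotomy a E), Nat.pow_succ_r'.
    pose proof (NoDup_filter_eq_length a E HE). lia.
Qed.

Definition crossing (Ps : list (nat * nat)) : Prop :=
  forall p q, In p Ps -> In q Ps -> fst p < snd q /\ (fst p < fst q -> snd p < snd q).

(* The lowest common ancestor of any pair lies above an end of the straddling pair [p0], and both ends
   of [p0] have depth at most [d]. *)
Lemma crossing_straddle_depth l a r Ps p0 d :
  bst (Node l a r) -> crossing Ps -> In p0 Ps -> fst p0 <= a <= snd p0 ->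
  (forall p, In p Ps -> dist (Node l a r) (fst p) (snd p) < d) ->
  forall p, In p Ps -> depth (Node l a r) (fst p) <= 2 * d.
Proof.
  intros HB HC Hp0 Ha HD p Hp.
  assert (Hend : forall z, z = fst p0 \/ z = snd p0 -> depth (Node l a r) z <= d).
  { pose proof (HD p0 Hp0). pose proof (lcp_straddle l a r _ _ HB Ha).
    pose proof (depth_le_dist_lcp (Node l a r) (fst p0) (snd p0)).
    pose proof (depth_le_dist_lcp (Node l a r) (snd p0) (fst p0)) as Hy0.
    rewrite dist_sym, lcp_comm in Hy0. intros z [->| ->]; lia. }
  assert (Hz : exists z, (z = fst p0 \/ z = snd p0) /\ fst p <= z <= snd p).
  { destruct (HC p p0 Hp Hp0) as [Hxy0 _]. destruct (HC p0 p Hp0 Hp) as [Hx0y Hmono].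
    destruct (le_lt_dec (fst p) (fst p0)).
    - exists (fst p0). split; [now left|lia].
    - exists (snd p0). split; [now right|]. specialize (Hmono ltac:(lia)). lia. }
  destruct Hz as (z & Hz & Hbetween).
  pose proof (lcp_le_depth_between _ _ _ _ HB Hbetween).
  pose proof (depth_le_dist_lcp (Node l a r) (fst p) (snd p)).
  pose proof (HD p Hp). pose proof (Hend z Hz). lia.
Qed.

Lemma crossing_length_bound d t Ps :
  bst t -> crossing Ps -> NoDup (map fst Ps) ->
  (forall p, In p Ps -> In (fst p) (inorder t)) ->
  (forall p, In p Ps -> dist t (fst p) (snd p) < d) ->
  length Ps < 2 ^ (2 * d).
Proof.
  revert Ps; induction t as [|l IHl a r IHr]; intros Ps HB HC HN HK HD.
  - destruct Ps as [|p Ps]; [apply Nat.neq_0_lt_0, Nat.pow_nonzero; lia|].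
    destruct (HK p (or_introl eq_refl)).
  - assert (Hlt : forall p, In p Ps -> fst p < snd p) by (intros p Hp; apply (HC p p Hp Hp)).
    destruct (classic (exists p0, In p0 Ps /\ fst p0 <= a <= snd p0)) as [(p0 & Hp0 & Ha)|Hno].
    { rewrite <- (length_map fst). apply (NoDup_bounded_depth_length (Node l a r)); auto.
      intros e He. apply in_map_iff in He as (p & <- & Hp). split; [now apply HK|].
      now apply (crossing_straddle_depth l a r Ps p0 d). }
    destruct (classic (exists p0, In p0 Ps /\ snd p0 < a)) as [(p0 & Hp0 & Ha)|Hnl].
    + assert (Hleft : forall p, In p Ps -> snd p < a).
      { intros p Hp. destruct (HC p p0 Hp Hp0) as [H _].
        destruct (le_lt_dec a (snd p)); [|lia].
        exfalso. apply Hno. exists p. split; auto. lia. }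
      apply IHl; auto; [apply HB| |].
      * intros p Hp. apply (in_inorder_l l a r); auto.
        specialize (Hleft p Hp). specialize (Hlt p Hp). lia.
      * intros p Hp. specialize (Hleft p Hp). specialize (Hlt p Hp).
        rewrite <- (dist_l l a r) by lia. auto.
    + assert (Hright : forall p, In p Ps -> a < fst p).
      { intros p Hp. destruct (le_lt_dec (fst p) a) as [Hle|]; [|lia]. exfalso.
        destruct (le_lt_dec a (snd p)).
        - apply Hno. exists p. auto.
        - apply Hnl. exists p. auto. }
      apply IHr; auto; [apply HB| |].
      * intros p Hp. apply (in_inorder_r l a r); auto.
      * intros p Hp. specialize (Hright p Hp). specialize (Hlt p Hp).
        rewrite <- (dist_r l a r) by lia. auto.
Qed.

(** * Finger costs *)

Definition upd (pos : nat -> nat) (f x : nat) : nat -> nat :=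
  fun j => if Nat.eqb j f then x else pos j.

Lemma finger_cost_cons t pos f fs x X :
  finger_cost t pos (f :: fs) (x :: X) = 1 + dist t x (pos f) + finger_cost t (upd pos f x) fs X.
Proof. reflexivity. Qed.

Fixpoint fingers_after (pos : nat -> nat) (fs X : list nat) : nat -> nat :=
  match fs, X with
  | f :: fs', x :: X' => fingers_after (upd pos f x) fs' X'
  | _, _ => pos
  end.

Lemma finger_cost_app t pos fs1 X1 fs2 X2 :
  length fs1 = length X1 ->
  finger_cost t pos (fs1 ++ fs2) (X1 ++ X2) =
  finger_cost t pos fs1 X1 + finger_cost t (fingers_after pos fs1 X1) fs2 X2.
Proof.
  revert pos X1; induction fs1 as [|f fs1 IH]; intros pos [|x X1] HL; try discriminate; auto.
  cbn [app fingers_after]. rewrite !finger_cost_cons, IH by (simpl in HL; lia). lia.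
Qed.

Lemma fingers_after_notin pos fs X f : ~ In f fs -> fingers_after pos fs X f = pos f.
Proof.
  revert pos X; induction fs as [|g fs IH]; intros pos [|x X] Hf; auto.
  simpl. rewrite IH by (intros H; apply Hf; now right).
  unfold upd. destruct (Nat.eqb_spec f g); [subst; destruct Hf; now left|auto].
Qed.

Lemma fingers_after_map pos fs g f :
  NoDup fs -> In f fs -> fingers_after pos fs (map g fs) f = g f.
Proof.
  revert pos; induction fs as [|h fs IH]; intros pos Hnd Hf; [destruct Hf|].
  apply NoDup_cons_iff in Hnd as [Hh Hnd]. simpl.
  destruct (in_dec Nat.eq_dec f fs) as [Hin|Hout]; [now apply IH|].
  destruct Hf as [<-|]; [|contradiction].
  rewrite fingers_after_notin by assumption. unfold upd. now rewrite Nat.eqb_refl.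
Qed.

Lemma finger_cost_distinct t pos fs g :
  NoDup fs ->
  finger_cost t pos fs (map g fs) = list_sum (map (fun f => 1 + dist t (g f) (pos f)) fs).
Proof.
  revert pos; induction fs as [|f fs IH]; intros pos Hnd; auto.
  apply NoDup_cons_iff in Hnd as [Hf Hnd]. simpl map. rewrite finger_cost_cons, IH by assumption.
  simpl. do 3 f_equal. apply map_ext_in. intros h Hh. unfold upd.
  destruct (Nat.eqb_spec h f); [subst; contradiction|reflexivity].
Qed.

Lemma finger_cost_ge_next_use t pos fs1 X1 f fs2 y X2 :
  length fs1 = length X1 -> ~ In f fs1 ->
  1 + dist t y (pos f) <= finger_cost t pos (fs1 ++ f :: fs2) (X1 ++ y :: X2).
Proof.
  intros HL Hf. rewrite finger_cost_app, finger_cost_cons, fingers_after_notin by assumption. lia.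
Qed.

Lemma in_split_first (f : nat) l : In f l -> exists l1 l2, l = l1 ++ f :: l2 /\ ~ In f l1.
Proof.
  induction l as [|g l IH]; intros Hf; [destruct Hf|].
  destruct (Nat.eq_dec g f) as [<-|Hgf].
  - exists [], l. split; auto.
  - destruct Hf as [|Hf]; [contradiction|]. destruct (IH Hf) as (l1 & l2 & -> & Hl1).
    exists (g :: l1), l2. split; auto. intros [|]; contradiction.
Qed.

Lemma finger_cost_ge_repeat t pos fs X :
  length fs = length X -> ~ NoDup fs ->
  exists i j, i < j < length X /\ dist t (nth j X 0) (nth i X 0) <= finger_cost t pos fs X.
Proof.
  revert pos X; induction fs as [|f fs IH]; intros pos [|x X] HL Hnd; try discriminate.
  { exfalso. apply Hnd. constructor. }
  injection HL as HL. rewrite finger_cost_cons.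
  destruct (in_dec Nat.eq_dec f fs) as [Hin|Hout].
  - destruct (in_split_first f fs Hin) as (fs1 & fs2 & -> & Hf).
    rewrite length_app in HL. simpl in HL.
    set (X1 := firstn (length fs1) X).
    assert (HX1 : length fs1 = length X1) by (unfold X1; rewrite length_firstn; lia).
    destruct (skipn (length fs1) X) as [|y X2] eqn:E.
    { apply (f_equal (@length nat)) in E. rewrite length_skipn in E. simpl in E. lia. }
    assert (HX : X = X1 ++ y :: X2) by (rewrite <- E; symmetry; apply firstn_skipn).
    assert (Hy : nth (length fs1) X 0 = y)
      by (rewrite <- (Nat.add_0_r (length fs1)), <- nth_skipn, E; reflexivity).
    pose proof (finger_cost_ge_next_use t (upd pos f x) fs1 X1 f fs2 y X2 HX1 Hf) as Hc.
    rewrite <- HX in Hc. unfold upd at 1 in Hc. rewrite Nat.eqb_refl in Hc.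
    exists 0, (S (length fs1)). split; [simpl; lia|]. cbn [nth]. rewrite Hy. lia.
  - assert (Hnd' : ~ NoDup fs) by (intros H; apply Hnd; now constructor).
    destruct (IH (upd pos f x) X HL Hnd') as (i & j & Hij & Hc).
    exists (S i), (S j). simpl. split; lia.
Qed.

Lemma NoDup_bounded_length fs K : NoDup fs -> (forall f, In f fs -> f < K) -> length fs <= K.
Proof.
  intros Hnd HK. rewrite <- (length_seq K 0). apply NoDup_incl_length; auto.
  intros f Hf. apply in_seq. specialize (HK f Hf). lia.
Qed.

(** * The staircase sequence *)

Definition key (m a i : nat) : nat := a * m + i + 1.

Definition round (k m i : nat) : list nat := map (fun a => key m a i) (seq 0 k).

Definition rounds (k m : nat) (is : list nat) : list nat := flat_map (round k m) is.

Definition staircase (k m : nat) : list nat := rounds k m (seq 0 m).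

Lemma length_round k m i : length (round k m i) = k.
Proof. unfold round. now rewrite length_map, length_seq. Qed.

Lemma nth_round k m i a : a < k -> nth a (round k m i) 0 = key m a i.
Proof.
  intros Ha. unfold round.
  rewrite nth_indep with (d' := key m 0 i) by (now rewrite length_map, length_seq).
  change (key m 0 i) with ((fun a => key m a i) 0). now rewrite map_nth, seq_nth.
Qed.

Lemma length_rounds k m is : length (rounds k m is) = length is * k.
Proof. apply flat_map_constant_length. intros. apply length_round. Qed.

Lemma nth_rounds k m is i a :
  i < length is -> a < k -> nth (i * k + a) (rounds k m is) 0 = key m a (nth i is 0).
Proof.
  revert i; induction is as [|j is IH]; intros i Hi Ha; [simpl in Hi; lia|].
  unfold rounds. cbn [flat_map]. fold (rounds k m is).
  destruct i as [|i].
  - rewrite app_nth1 by (rewrite length_round; lia). now apply nth_round.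
  - rewrite app_nth2 by (rewrite length_round; nia). rewrite length_round.
    replace (S i * k + a - k) with (i * k + a) by nia. simpl in Hi |- *. apply IH; lia.
Qed.

Lemma length_staircase k m : length (staircase k m) = k * m.
Proof. unfold staircase. rewrite length_rounds, length_seq. lia. Qed.

Lemma in_staircase k m x : In x (staircase k m) -> 1 <= x <= k * m.
Proof.
  unfold staircase, rounds, round. intros Hx.
  apply in_flat_map in Hx as (i & Hi & Hx). apply in_map_iff in Hx as (a & <- & Ha).
  apply in_seq in Hi, Ha. unfold key. nia.
Qed.

Lemma staircase_k_monotone k m : 1 <= k -> k_monotone k (staircase k m).
Proof.
  intros Hk. exists (fun t => t mod k). split; [intros i _; apply Nat.mod_upper_bound; lia|].
  left. intros i j Hij Hc. rewrite length_staircase in Hij.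
  assert (Hnth : forall t, t < k * m -> nth t (staircase k m) 0 = key m (t mod k) (t / k)).
  { intros t Ht. assert (t / k < m) by (apply Nat.Div0.div_lt_upper_bound; lia).
    rewrite (Nat.div_mod_eq t k) at 1. rewrite Nat.mul_comm. unfold staircase.
    rewrite nth_rounds, seq_nth by (try rewrite length_seq; try apply Nat.mod_upper_bound; lia).
    reflexivity. }
  rewrite !Hnth, Hc by lia. unfold key.
  assert (i / k <= j / k) by (apply Nat.Div0.div_le_mono; lia).
  assert (i / k <> j / k).
  { intros E. pose proof (Nat.div_mod_eq i k). pose proof (Nat.div_mod_eq j k). lia. }
  lia.
Qed.

(** * Lower bound with [k - 1] fingers *)

Lemma round_cost_ge t k m i pos fs :
  1 <= k -> length fs = k -> (forall f, In f fs -> f < k - 1) ->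
  exists a b, a < b < k /\ dist t (key m a i) (key m b i) <= finger_cost t pos fs (round k m i).
Proof.
  intros Hk HL Hf.
  assert (Hrep : ~ NoDup fs)
    by (intros Hnd; pose proof (NoDup_bounded_length fs (k - 1) Hnd Hf); lia).
  destruct (finger_cost_ge_repeat t pos fs (round k m i)) as (a & b & Hab & Hc);
    [now rewrite length_round|assumption|].
  rewrite length_round in Hab. rewrite !nth_round in Hc by lia.
  exists a, b. split; [assumption|]. now rewrite dist_sym.
Qed.

Lemma rounds_cost_ge t k m pos fs is :
  1 <= k -> NoDup is -> length fs = length is * k -> (forall f, In f fs -> f < k - 1) ->
  exists A B : nat -> nat, (forall i, In i is -> A i < B i < k) /\
    list_sum (map (fun i => dist t (key m (A i) i) (key m (B i) i)) is)
      <= finger_cost t pos fs (rounds k m is).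
Proof.
  revert pos fs; induction is as [|i is IH]; intros pos fs Hk Hnd HL Hf.
  { exists (fun _ => 0), (fun _ => 0). simpl. split; [intros _ []|lia]. }
  apply NoDup_cons_iff in Hnd as [Hi Hnd].
  assert (Hf1 : forall f, In f (firstn k fs) -> f < k - 1)
    by (intros f H; apply Hf; rewrite <- (firstn_skipn k fs); now apply in_or_app; left).
  assert (Hf2 : forall f, In f (skipn k fs) -> f < k - 1)
    by (intros f H; apply Hf; rewrite <- (firstn_skipn k fs); now apply in_or_app; right).
  assert (HL1 : length (firstn k fs) = k) by (rewrite length_firstn; simpl in HL; lia).
  destruct (round_cost_ge t k m i pos (firstn k fs) Hk HL1 Hf1) as (a & b & Hab & Hround).
  destruct (IH (fingers_after pos (firstn k fs) (round k m i)) (skipn k fs) Hk Hnd)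
    as (A & B & HAB & Hrest); [rewrite length_skipn; simpl in HL; lia|assumption|].
  exists (fun j => if j =? i then a else A j), (fun j => if j =? i then b else B j). split.
  - intros j [<-|Hj]; [now rewrite Nat.eqb_refl|].
    destruct (Nat.eqb_spec j i); [subst; contradiction|auto].
  - rewrite <- (firstn_skipn k fs). unfold rounds. simpl flat_map.
    rewrite finger_cost_app by (now rewrite HL1, length_round). fold (rounds k m is).
    simpl. rewrite Nat.eqb_refl.
    erewrite map_ext_in; [apply Nat.add_le_mono; eassumption|].
    intros j Hj. destruct (Nat.eqb_spec j i); [subst; contradiction|reflexivity].
Qed.

Lemma length_filter_filter_le {A} (f g : A -> bool) l :
  length (filter f (filter g l)) <= length (filter f l).
Proof.
  induction l as [|x l IH]; simpl; auto. destruct (g x); simpl; destruct (f x); simpl; lia.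
Qed.

Lemma length_le_fibers {A} (h : A -> nat) K B l :
  (forall x, In x l -> h x < K) ->
  (forall c, c < K -> length (filter (fun x => h x =? c) l) <= B) ->
  length l <= K * B.
Proof.
  revert l; induction K as [|K IH]; intros l Hh Hfib.
  { destruct l as [|x l]; [auto|]. specialize (Hh x (or_introl eq_refl)). lia. }
  rewrite <- (filter_length (fun x => h x =? K) l).
  pose proof (Hfib K (Nat.lt_succ_diag_r K)).
  enough (length (filter (fun x => negb (h x =? K)) l) <= K * B) by lia.
  apply IH.
  - intros x Hx. apply filter_In in Hx as [Hx HK]. specialize (Hh x Hx).
    destruct (Nat.eqb_spec (h x) K); simpl in HK; [discriminate|lia].
  - intros c Hc. etransitivity; [apply length_filter_filter_le|]. apply Hfib. lia.
Qed.

Lemma crossing_rounds_bound t k m a b d I :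
  bst t -> inorder t = seq 1 (k * m) -> a < b < k -> NoDup I -> (forall i, In i I -> i < m) ->
  (forall i, In i I -> dist t (key m a i) (key m b i) < d) ->
  length I < 2 ^ (2 * d).
Proof.
  intros HB Ht Hab Hnd Hm HD.
  rewrite <- (length_map (fun i => (key m a i, key m b i)) I).
  apply (crossing_length_bound d t); [assumption| | | |].
  - intros p q Hp Hq.
    apply in_map_iff in Hp as (i & <- & Hi). apply in_map_iff in Hq as (j & <- & Hj).
    pose proof (Hm i Hi). pose proof (Hm j Hj). unfold key; simpl. split; nia.
  - rewrite map_map. apply Injective_map_NoDup; [|assumption]. intros i j. unfold key; simpl. lia.
  - intros p Hp. apply in_map_iff in Hp as (i & <- & Hi). specialize (Hm i Hi).
    rewrite Ht. apply in_seq. unfold key; simpl. nia.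
  - intros p Hp. apply in_map_iff in Hp as (i & <- & Hi). now apply HD.
Qed.

Lemma cheap_rounds_count t k m A B d :
  bst t -> inorder t = seq 1 (k * m) -> (forall i, i < m -> A i < B i < k) ->
  length (filter (fun i => dist t (key m (A i) i) (key m (B i) i) <? d) (seq 0 m))
    <= k * k * 2 ^ (2 * d).
Proof.
  intros HB Ht HAB.
  set (cheap := filter _ (seq 0 m)).
  assert (Hcheap : forall i, In i cheap -> i < m /\ dist t (key m (A i) i) (key m (B i) i) < d).
  { intros i Hi. apply filter_In in Hi as [Hi Hd]. apply in_seq in Hi. apply Nat.ltb_lt in Hd.
    lia. }
  apply (length_le_fibers (fun i => k * A i + B i) (k * k)).
  - intros i Hi. destruct (Hcheap i Hi) as [Him _]. specialize (HAB i Him). cbv beta. nia.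
  - intros c _. destruct (filter _ cheap) as [|i0 F] eqn:HF; [simpl; lia|].
    assert (Hfib : forall i, In i (i0 :: F) -> In i cheap /\ k * A i + B i = c).
    { intros i Hi. rewrite <- HF in Hi. apply filter_In in Hi as [Hi Hc].
      now apply Nat.eqb_eq in Hc. }
    assert (Htype : forall i, In i (i0 :: F) -> A i = A i0 /\ B i = B i0).
    { intros i Hi. destruct (Hfib i Hi) as [Hi' Hc].
      destruct (Hfib i0 (or_introl eq_refl)) as [Hi0 Hc0].
      apply (Nat.div_mod_unique k); [apply HAB, Hcheap, Hi'|apply HAB, Hcheap, Hi0|lia]. }
    apply Nat.lt_le_incl, (crossing_rounds_bound t k m (A i0) (B i0) d); auto.
    + apply HAB, Hcheap, Hfib. now left.
    + rewrite <- HF. apply NoDup_filter, NoDup_filter, seq_NoDup.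
    + intros i Hi. apply Hcheap, Hfib, Hi.
    + intros i Hi. destruct (Htype i Hi) as [<- <-]. apply Hcheap, Hfib, Hi.
Qed.

Lemma list_sum_ge_threshold {A} (g : A -> nat) d l :
  d * (length l - length (filter (fun x => g x <? d) l)) <= list_sum (map g l).
Proof.
  induction l as [|x l IH]; [simpl; lia|].
  change (list_sum (map g (x :: l))) with (g x + list_sum (map g l)).
  pose proof (filter_length_le (fun x => g x <? d) l) as Hc.
  set (c := length (filter (fun x => g x <? d) l)) in *.
  cbn [filter]. destruct (g x <? d) eqn:E; cbn [length]; fold c.
  - replace (S (length l) - S c) with (length l - c) by lia. lia.
  - apply Nat.ltb_ge in E. replace (S (length l) - c) with (S (length l - c)) by lia.
    rewrite Nat.mul_succ_r. lia.
Qed.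

Lemma staircase_cost_ge k m d c :
  2 <= k -> attainable (k * m) (k - 1) (staircase k m) c -> d * (m - k * k * 2 ^ (2 * d)) <= c.
Proof.
  intros Hk (t & l & fs & Ht & (_ & _ & Hfs & Hf) & <-).
  unfold staircase in *. rewrite length_rounds in Hfs.
  destruct (rounds_cost_ge t k m (fun i => nth i l 0) fs (seq 0 m)) as (A & B & HAB & Hcost);
    [lia|apply seq_NoDup|assumption|assumption|].
  pose proof (cheap_rounds_count t k m A B d (is_BST_on_bst _ _ Ht) Ht) as Hcheap.
  specialize (Hcheap ltac:(intros i Hi; apply HAB, in_seq; lia)).
  pose proof (list_sum_ge_threshold (fun i => dist t (key m (A i) i) (key m (B i) i)) d (seq 0 m))
    as Hsum.
  rewrite length_seq in Hsum.
  etransitivity; [|exact Hcost]. etransitivity; [|exact Hsum].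
  apply Nat.mul_le_mono_l. lia.
Qed.

(** * Upper bound with [k] fingers *)

Fixpoint path_tree (lo n : nat) : tree :=
  match n with
  | 0 => Leaf
  | S n' => Node Leaf lo (path_tree (S lo) n')
  end.

Lemma inorder_path_tree n lo : inorder (path_tree lo n) = seq lo n.
Proof. revert lo; induction n as [|n IH]; intros lo; simpl; now rewrite ?IH. Qed.

Lemma search_path_path_tree n lo x :
  lo <= x < lo + n -> search_path (path_tree lo n) x = seq lo (S (x - lo)).
Proof.
  revert lo; induction n as [|n IH]; intros lo Hx; [lia|]. simpl path_tree.
  destruct (Nat.eq_dec x lo) as [->|Hne].
  - now rewrite search_path_root, Nat.sub_diag.
  - rewrite search_path_r, IH by lia.
    replace (S (x - lo)) with (S (S (x - S lo))) by lia. reflexivity.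
Qed.

Lemma lcp_seq a b lo : lcp (seq lo a) (seq lo b) = Nat.min a b.
Proof.
  revert b lo; induction a as [|a IH]; intros [|b] lo; simpl; auto.
  now rewrite Nat.eqb_refl, IH.
Qed.

Lemma dist_path_tree n x y :
  1 <= x <= n -> 1 <= y <= n -> dist (path_tree 1 n) x y = (x - y) + (y - x).
Proof.
  intros Hx Hy. unfold dist. rewrite !search_path_path_tree by lia.
  rewrite lcp_seq, !length_seq. lia.
Qed.

Lemma list_sum_map_le {A} (g : A -> nat) c l :
  (forall x, In x l -> g x <= c) -> list_sum (map g l) <= c * length l.
Proof.
  induction l as [|x l IH]; intros Hg; simpl; [lia|].
  pose proof (Hg x (or_introl eq_refl)). specialize (IH (fun y Hy => Hg y (or_intror Hy))). lia.
Qed.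

Lemma rounds_cost_path_tree k m i0 r pos :
  i0 + r <= m -> (forall a, a < k -> 1 <= pos a /\ pos a <= key m a i0 <= pos a + 1) ->
  finger_cost (path_tree 1 (k * m)) pos (flat_map (fun _ => seq 0 k) (seq i0 r))
    (rounds k m (seq i0 r)) <= 2 * k * r.
Proof.
  revert i0 pos; induction r as [|r IH]; intros i0 pos Hr Hpos; [simpl; lia|].
  cbn [seq flat_map]. unfold rounds. cbn [flat_map].
  rewrite finger_cost_app by (now rewrite length_seq, length_round).
  fold (rounds k m (seq (S i0) r)).
  assert (Hround : finger_cost (path_tree 1 (k * m)) pos (seq 0 k) (round k m i0) <= 2 * k).
  { unfold round. rewrite finger_cost_distinct by apply seq_NoDup.
    rewrite <- (length_seq k 0) at 2. apply list_sum_map_le.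
    intros a Ha. apply in_seq in Ha. specialize (Hpos a ltac:(lia)). unfold key in *.
    rewrite dist_path_tree by nia. lia. }
  enough (finger_cost (path_tree 1 (k * m)) (fingers_after pos (seq 0 k) (round k m i0))
            (flat_map (fun _ => seq 0 k) (seq (S i0) r)) (rounds k m (seq (S i0) r))
          <= 2 * k * r) by lia.
  apply IH; [lia|]. intros a Ha. unfold round.
  rewrite fingers_after_map by (apply seq_NoDup || (apply in_seq; lia)). unfold key. lia.
Qed.

Lemma staircase_cost_le k m :
  1 <= k -> 1 <= m -> exists c, attainable (k * m) k (staircase k m) c /\ c <= 2 * (k * m).
Proof.
  intros Hk Hm. set (fs := flat_map (fun _ => seq 0 k) (seq 0 m)).
  exists (finger_cost (path_tree 1 (k * m)) (fun a => nth a (round k m 0) 0) fs (staircase k m)).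
  split.
  - exists (path_tree 1 (k * m)), (round k m 0), fs.
    split; [apply inorder_path_tree|]. split; [|reflexivity]. split; [|split; [|split]].
    + apply length_round.
    + intros p Hp. unfold round in Hp. apply in_map_iff in Hp as (a & <- & Ha).
      apply in_seq in Ha. unfold key. nia.
    + rewrite length_staircase. unfold fs. rewrite (flat_map_constant_length (c := k)).
      * rewrite length_seq. lia.
      * intros. apply length_seq.
    + intros f Hf. unfold fs in Hf. apply in_flat_map in Hf as (_ & _ & Hf).
      apply in_seq in Hf. lia.
  - unfold staircase. etransitivity; [apply rounds_cost_path_tree; [lia|]|lia].
    intros a Ha. rewrite nth_round by assumption. unfold key. lia.
Qed.

Lemma is_Fk_exists n k X : (exists c, attainable n k X c) -> exists v, is_Fk n k X v.
Proof.
  intros Hc.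
  destruct (dec_inh_nat_subset_has_unique_least_element (attainable n k X)
              (fun c => classic (attainable n k X c)) Hc) as (v & Hv & _).
  now exists v.
Qed.

Lemma two_mul_sq_le_pow k : 2 * k * k <= 2 ^ (2 * k).
Proof.
  induction k as [|k IH]; [simpl; lia|].
  replace (2 * S k) with (S (S (2 * k))) by lia. rewrite !Nat.pow_succ_r'.
  destruct k as [|k]; [simpl; lia|]. nia.
Qed.

Lemma staircase_Fk_lower k q :
  2 <= k -> k <= q ->
  exists v, is_Fk (k * 2 ^ (4 * q)) (k - 1) (staircase k (2 ^ (4 * q))) v /\
            q * 2 ^ (4 * q) <= 2 * v.
Proof.
  intros Hk Hq. set (m := 2 ^ (4 * q)).
  destruct (is_Fk_exists (k * m) (k - 1) (staircase k m)) as [v Hv].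
  { eexists. exists (path_tree 1 (k * m)), (repeat 1 (k - 1)), (repeat 0 (k * m)).
    split; [apply inorder_path_tree|]. split; [|reflexivity].
    split; [apply repeat_length|]. split; [|split].
    - intros p Hp. apply repeat_spec in Hp as ->.
      assert (1 <= m) by (apply Nat.neq_0_lt_0, Nat.pow_nonzero; lia). nia.
    - now rewrite repeat_length, length_staircase.
    - intros i Hi. apply repeat_spec in Hi. lia. }
  exists v. split; [assumption|].
  pose proof (staircase_cost_ge k m q v Hk (proj1 Hv)) as Hlow.
  assert (Hsq : 2 * k * k * 2 ^ (2 * q) <= m).
  { unfold m. replace (4 * q) with (2 * q + 2 * q) by lia. rewrite Nat.pow_add_r.
    apply Nat.mul_le_mono_r. etransitivity; [apply two_mul_sq_le_pow|].
    apply Nat.pow_le_mono_r; lia. }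
  nia.
Qed.

Lemma staircase_Fk_upper k m :
  1 <= k -> 1 <= m -> exists v, is_Fk (k * m) k (staircase k m) v /\ v <= 2 * (k * m).
Proof.
  intros Hk Hm. destruct (staircase_cost_le k m Hk Hm) as (c & Hc & Hle).
  destruct (is_Fk_exists _ _ _ (ex_intro _ c Hc)) as [v Hv]. exists v. split; [assumption|].
  pose proof (proj2 Hv c Hc). lia.
Qed.

Open Scope R_scope.

Lemma plog_pow2 e : (1 <= e)%nat -> plog (INR (2 ^ e)) = INR e.
Proof.
  intros He. unfold plog. rewrite Rmax_right.
  - rewrite pow_INR. replace (INR 2) with 2 by (simpl; lra).
    rewrite ln_pow by lra. pose proof ln_lt_2. field. lra.
  - replace 2 with (INR 2) by (simpl; lra). apply le_INR.
    exact (Nat.pow_le_mono_r 2 1 e ltac:(lia) He).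
Qed.

Theorem theorem12 :
  exists c C : R, 0 < c /\ 0 < C /\
  forall k : nat, (2 <= k)%nat ->
  forall N : nat, exists n : nat, (N <= n)%nat /\
    exists S : list nat,
      length S = n /\ (forall x, In x S -> (1 <= x <= n)%nat) /\
      k_monotone k S /\
      (exists v, is_Fk n (k - 1) S v /\
         c * (INR n / INR k) * plog (INR n / INR k) <= INR v) /\
      (exists v, is_Fk n k S v /\ INR v <= C * INR n).
Proof.
  exists (1/8), 2. split; [lra|]. split; [lra|].
  intros k Hk N. set (q := (k + N)%nat). set (m := (2 ^ (4 * q))%nat).
  assert (Hm : (4 * q < m)%nat) by (apply Nat.pow_gt_lin_r; lia).
  exists (k * m)%nat. split; [nia|].
  exists (staircase k m). split; [apply length_staircase|]. split; [apply in_staircase|].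
  split; [apply staircase_k_monotone; lia|]. split.
  - destruct (staircase_Fk_lower k q) as (v & Hv & Hqv); [lia|lia|].
    exists v. split; [exact Hv|].
    apply le_INR in Hqv. rewrite !mult_INR in Hqv.
    assert (Hk0 : 0 < INR k) by (apply lt_0_INR; lia).
    replace (INR (k * m) / INR k) with (INR m) by (rewrite mult_INR; field; lra).
    unfold m. rewrite plog_pow2, mult_INR by lia. replace (INR 4) with 4 by (simpl; lra).
    replace (INR 2) with 2 in Hqv by (simpl; lra). nra.
  - destruct (staircase_Fk_upper k m) as (v & Hv & Hle); [lia|lia|].
    exists v. split; [exact Hv|].
    apply le_INR in Hle. rewrite mult_INR in Hle.
    replace (INR 2) with 2 in Hle by (simpl; lra). lra.
Qed.
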